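(* For every positive integer $n$, the uniqueness property fails for the triple graph $\mathcal{T}_n$: there exist two vertices of $\mathcal{T}_n$ whose triples of integers have the same largest element but are not equal (not even up to permutation of their entries). More precisely, for every $j\ge 1$ the graph $\mathcal{T}_n$ contains vertices labelled \[ \Big(\breve K(S_n(0)),\ \breve K\big(S_n(0)^{5j+1}S_n(1)\big),\ \breve K\big(S_n(0)^{5j}S_n(1)\big)\Big) \quad\text{and}\quad \Big(\breve K\big(S_n(0)S_n(1)^{3j}\big),\ \breve K\big(S_n(0)S_n(1)^{3j+1}\big),\ \breve K(S_n(1))\Big), \] these two triples have equal largest element, and they are distinct triples.
   Context: For finite sequences of positive integers $\alpha=(a_1,\dots,a_k)$, $\beta=(b_1,\dots,b_m)$, the concatenation is $\alpha\beta=\alpha\oplus\beta=(a_1,\dots,a_k,b_1,\dots,b_m)$, and $\alpha^k$ denotes the concatenation of $k$ copies of $\alpha$. The continued fraction $[a_1;a_2:\dots:a_k]$ means $a_1+\cfrac{1}{a_2+\cfrac{1}{\ddots+\cfrac{1}{a_k}}}$. For a sequence $(a_1,\dots,a_k)$ of positive integers with $k\ge2$, the integer sine $\breve K(a_1,\dots,a_k)$ is the integer $c$ where $[a_1;a_2:\dots:a_{k-1}]=c/d$ with $\gcd(c,d)=1$, $c,d>0$ (note the last entry $a_k$ is omitted). On triples $(\alpha,\gamma,\beta)$ of finite sequences define $\mathcal L(\alpha,\gamma,\beta)=(\alpha,\alpha\gamma,\gamma)$ and $\mathcal R(\alpha,\gamma,\beta)=(\gamma,\gamma\beta,\beta)$.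 The graph $\mathcal G(\alpha,\beta)$ is the binary graph with root $(\alpha,\alpha\beta,\beta)$ whose vertices are all triples obtained from the root by finitely many applications of $\mathcal L,\mathcal R$, with an edge $(v,w)$ whenever $w=\mathcal L(v)$ or $w=\mathcal R(v)$. The triple graph of integers $X(\mathcal G(\alpha,\beta))$ is obtained by replacing each vertex $(\alpha',\gamma',\beta')$ by the integer triple $\chi(\alpha',\gamma',\beta')=(\breve K(\alpha'),\breve K(\gamma'),\breve K(\beta'))$ (and each edge $(v,w)$ by $(\chi(v),\chi(w))$). For a positive integer $n$ let $a_n=n^2+3$, $b_n=n^4+5n^2+5$, $S_n(0)=(na_n,na_n)$, $S_n(1)=(nb_n,nb_n)$, and $\mathcal T_n=X(\mathcal G(S_n(0),S_n(1)))$. *)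

From mathcomp Require Import all_boot all_order all_algebra.
Set Implicit Arguments. Unset Strict Implicit. Unset Printing Implicit Defensive.
Import GRing.Theory Num.Theory.
Local Open Scope ring_scope.

(* Finite sequences of positive integers are represented as [seq nat]. *)

Fixpoint cfrac (a : nat) (s : seq nat) : rat :=
  match s with
  | [::] => a%:R
  | b :: s' => a%:R + (cfrac b s')^-1
  end.

(* Integer sine: for (a_1,...,a_k), k >= 2, the numerator c of the reduced
   fraction [a_1; ...; a_{k-1}] = c/d (last entry omitted).  numq gives the
   reduced numerator (denominator positive); we take its absolute value,
   which is the numerator itself as the value is positive.  Defaults to 0
   for k < 2 (never used). *)
Definition isine (s : seq nat) : nat :=
  match s with
  | a :: b :: t => `|numq (cfrac a (belast b t))|%N
  | _ => 0%N
  end.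

Definition seqpow (al : seq nat) (k : nat) : seq nat := flatten (nseq k al).

Definition triple := (seq nat * seq nat * seq nat)%type.

Definition opL (v : triple) : triple :=
  let: (al, ga, be) := v in (al, al ++ ga, ga).
Definition opR (v : triple) : triple :=
  let: (al, ga, be) := v in (ga, ga ++ be, be).

(* apply a word of moves (true = L, false = R), first letter first *)
Definition apply_moves (w : seq bool) (v : triple) : triple :=
  foldl (fun v b => if b then opL v else opR v) v w.

Definition is_vertex (al be : seq nat) (v : triple) : Prop :=
  exists w : seq bool, v = apply_moves w (al, al ++ be, be).

Definition chi (v : triple) : nat * nat * nat :=
  let: (al, ga, be) := v in (isine al, isine ga, isine be).

Definition is_label (al be : seq nat) (t : nat * nat * nat) : Prop :=
  exists v, is_vertex al be v /\ chi v = t.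

Definition max3 (t : nat * nat * nat) : nat :=
  let: (x, y, z) := t in maxn x (maxn y z).

Definition entries (t : nat * nat * nat) : seq nat :=
  let: (x, y, z) := t in [:: x; y; z].

Definition a_ (n : nat) : nat := (n ^ 2 + 3)%N.
Definition b_ (n : nat) : nat := (n ^ 4 + 5 * n ^ 2 + 5)%N.
Definition S0 (n : nat) : seq nat := [:: n * a_ n; n * a_ n]%N.
Definition S1 (n : nat) : seq nat := [:: n * b_ n; n * b_ n]%N.

From mathcomp Require Import all_boot all_order all_algebra.
From mathcomp Require Import ring zify.
Import GRing.Theory Num.Theory.
Local Open Scope ring_scope.

(* The integer sine of [s ++ [:: x]] is the continuant K(s), the first
   coordinate of the product of the matrices T(a) = [[a, 1], [1, 0]] over the
   digits a of s applied to (1, 0).  The blocks S_n(0)^5 and S_n(1)^3 have matrices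
   of determinant 1 and equal trace, so by Cayley-Hamilton the continuants
   K(S_n(0) S_n(0)^(5j) q) and K(S_n(0) S_n(1)^(3j) q), q = n b_n, satisfy the
   same linear recurrence of order 2 in j; they agree for j = 0, 1, hence for
   all j.  This is the common largest entry of the two triples, because
   continuants of positive sequences grow when entries are inserted; and the
   entry n a_n of the first triple is smaller than every entry of the second. *)

Notation positive := (all (fun a => 0 < a)%N).

Lemma seqpowS s k : seqpow s k.+1 = s ++ seqpow s k.
Proof. by []. Qed.

Lemma seqpowD s k m : seqpow s (k + m) = seqpow s k ++ seqpow s m.
Proof. by rewrite /seqpow nseqD flatten_cat. Qed.

Lemma seqpowSr s k : seqpow s k.+1 = seqpow s k ++ s.
Proof. by rewrite -addn1 seqpowD /seqpow /= cats0. Qed.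

Lemma seqpowM s k m : seqpow s (k * m) = seqpow (seqpow s m) k.
Proof. by elim: k => [|k IH] //; rewrite mulSn seqpowD IH. Qed.

Lemma positive_seqpow s k : positive s -> positive (seqpow s k).
Proof. by move=> s_pos; elim: k => [|k IH] //; rewrite seqpowS all_cat s_pos. Qed.

Definition cont_step (a : nat) (v : nat * nat) : nat * nat := (a * v.1 + v.2, v.1)%N.

(* [contpair (a :: s) = (continuant (a :: s), continuant s)]. *)
Definition contpair (s : seq nat) : nat * nat := foldr cont_step (1, 0)%N s.

Definition continuant (s : seq nat) : nat := (contpair s).1.

Lemma contpair_cat u w : contpair (u ++ w) = foldr cont_step (contpair w) u.
Proof. exact: foldr_cat. Qed.

Lemma continuant_gt0 s : positive s -> (0 < continuant s)%N.
Proof.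
rewrite /continuant; elim: s => [|a s IH] //= /andP[a_gt0 /IH].
rewrite /cont_step /=; nia.
Qed.

Lemma coprime_contpair s : coprime (contpair s).1 (contpair s).2.
Proof.
by elim: s => [|a s IH] //=; rewrite /coprime gcdnC gcdnMDl.
Qed.

Lemma cfrac_continuant a s : positive (a :: s) ->
  cfrac a s = (continuant (a :: s))%:R / (continuant s)%:R.
Proof.
elim: s a => [|b s IH] a /= pos_as; first by rewrite /continuant /= muln1 addn0 divr1.
case/andP: pos_as => _ pos_bs; rewrite IH // invf_div.
have Kbs_neq0 : (continuant (b :: s))%:R != 0 :> rat
  by rewrite pnatr_eq0 -lt0n continuant_gt0.
have Ks_neq0 : (continuant s)%:R != 0 :> rat
  by rewrite pnatr_eq0 -lt0n continuant_gt0 //; case/andP: pos_bs.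
move: Kbs_neq0; rewrite /continuant /= !natrD !natrM => Kbs_neq0.
by field; rewrite Kbs_neq0.
Qed.

Lemma numq_cfrac a s : positive (a :: s) -> `|numq (cfrac a s)|%N = continuant (a :: s).
Proof.
move=> pos_as; rewrite cfrac_continuant //.
rewrite -[_%:R]/((continuant (a :: s))%:Z%:~R) -[X in _ / X]/((continuant s)%:Z%:~R).
rewrite coprimeq_num.
  by rewrite gtr0_sg ?mul1r // ltz_nat continuant_gt0 //; case/andP: pos_as.
exact: coprime_contpair.
Qed.

Lemma isine_rcons l x : l != [::] -> positive l -> isine (rcons l x) = continuant l.
Proof.
case: l => [|a [|c l]] // _ pos_l; first by rewrite -numq_cfrac.
by rewrite rcons_cons /= belast_rcons numq_cfrac.
Qed.

Lemma continuant1 a : continuant [:: a] = a.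
Proof. by rewrite /continuant /=; lia. Qed.

Definition le_pair (v w : nat * nat) := ((v.1 <= w.1) && (v.2 <= w.2))%N.

Lemma le_pair_foldr u {v w} : le_pair v w ->
  le_pair (foldr cont_step v u) (foldr cont_step w u).
Proof.
rewrite /le_pair; elim: u => [|a u IH] //= /IH.
case: (foldr _ v u) (foldr _ w u) => [x y] [x' y'] /= /andP[le_x le_y].
by rewrite /cont_step /= le_x andbT leq_add // leq_mul2l le_x orbT.
Qed.

Lemma contpair_snd_le s : positive s -> ((contpair s).2 <= (contpair s).1)%N.
Proof. by case: s => [|a s] //= /andP[a_gt0 _]; rewrite /cont_step /=; nia. Qed.

Lemma le_contpair_cat {v w} : positive v -> positive w ->
  le_pair (contpair w) (contpair (v ++ w)).
Proof.
move=> + /contpair_snd_le; rewrite /le_pair.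
elim: v => [|a v IH] /=; first by rewrite !leqnn.
case/andP=> a_gt0 /IH{}IH w_le; move: (IH w_le).
by case: (contpair w) (contpair (v ++ w)) w_le => [x y] [x' y'] /=; rewrite /cont_step /=; nia.
Qed.

Lemma leq_continuant_insert u v w : positive v -> positive w ->
  (continuant (u ++ w) <= continuant (u ++ v ++ w))%N.
Proof.
move=> pos_v pos_w; rewrite /continuant !(contpair_cat u).
by case/andP: (le_pair_foldr u (le_contpair_cat pos_v pos_w)).
Qed.

Lemma leq_continuant_catl v w : positive v -> positive w ->
  (continuant w <= continuant (v ++ w))%N.
Proof. exact: (leq_continuant_insert [::]). Qed.

Lemma ltn_continuant_double a s : (0 < a)%N -> positive s ->
  (a < continuant (a :: a :: s))%N.
Proof.
move=> a_gt0 pos_s.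
have := leq_continuant_insert [:: a; a] s [::] pos_s isT.
rewrite !cats0; apply: leq_trans; rewrite /continuant /= /cont_step /=; nia.
Qed.

Record mx2 := Mx2 { m00 : int; m01 : int; m10 : int; m11 : int }.

Definition mx2_app (M : mx2) (v : int * int) : int * int :=
  (m00 M * v.1 + m01 M * v.2, m10 M * v.1 + m11 M * v.2).

Definition mx2_mul (M N : mx2) : mx2 :=
  Mx2 (m00 M * m00 N + m01 M * m10 N) (m00 M * m01 N + m01 M * m11 N)
      (m10 M * m00 N + m11 M * m10 N) (m10 M * m01 N + m11 M * m11 N).

Definition mx2_det (M : mx2) : int := m00 M * m11 M - m01 M * m10 M.

Definition mx2_tr (M : mx2) : int := m00 M + m11 M.

Lemma mx2_appM M N v : mx2_app (mx2_mul M N) v = mx2_app M (mx2_app N v).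
Proof. by case: M N v => [a b c d] [e f g h] [x y]; congr pair; rewrite /=; ring. Qed.

Lemma mx2_detM M N : mx2_det (mx2_mul M N) = mx2_det M * mx2_det N.
Proof. by case: M N => [a b c d] [e f g h]; rewrite /mx2_det /=; ring. Qed.

Lemma mx2_cayley_hamilton L C v :
  (mx2_app L (mx2_app C (mx2_app C v))).1 =
  mx2_tr C * (mx2_app L (mx2_app C v)).1 - mx2_det C * (mx2_app L v).1.
Proof. by case: L C v => [a b c d] [e f g h] [x y]; rewrite /mx2_tr /mx2_det /=; ring. Qed.

(* Both sequences satisfy the recurrence [x_(k+2) = tr * x_(k+1) - det * x_k]. *)
Lemma iter_mx2_app_eq L C D v : mx2_det C = mx2_det D -> mx2_tr C = mx2_tr D ->
  (mx2_app L (mx2_app C v)).1 = (mx2_app L (mx2_app D v)).1 ->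
  forall k, (mx2_app L (iter k (mx2_app C) v)).1 = (mx2_app L (iter k (mx2_app D) v)).1.
Proof.
move=> eq_det eq_tr eq_1 k.
suff [] : (mx2_app L (iter k (mx2_app C) v)).1 = (mx2_app L (iter k (mx2_app D) v)).1 /\
  (mx2_app L (iter k.+1 (mx2_app C) v)).1 = (mx2_app L (iter k.+1 (mx2_app D) v)).1 by [].
elim: k => [|k [IHk IHk1]] //; split=> //.
by rewrite !iterS !mx2_cayley_hamilton -!iterS IHk IHk1 eq_det eq_tr.
Qed.

Definition digit_mx (a : nat) : mx2 := Mx2 a%:Z 1 1 0.

Definition transfer (s : seq nat) : mx2 :=
  foldr (fun a M => mx2_mul (digit_mx a) M) (Mx2 1 0 0 1) s.

Lemma mx2_det_transfer s : mx2_det (transfer s) = (-1) ^+ size s.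
Proof.
elim: s => [|a s IH] /=; first by [].
by rewrite mx2_detM IH exprS /mx2_det /=; ring.
Qed.

Definition pairZ (v : nat * nat) : int * int := (v.1%:Z, v.2%:Z).

Lemma pairZ_contpair_cat u w :
  pairZ (contpair (u ++ w)) = mx2_app (transfer u) (pairZ (contpair w)).
Proof.
elim: u => [|a u IH] /=.
  by case: (contpair w) => x y; rewrite /mx2_app /=; congr pair; ring.
rewrite mx2_appM -IH; case: (contpair (u ++ w)) => x y.
by rewrite /pairZ /mx2_app /cont_step /=; congr pair; rewrite ?PoszD ?PoszM; ring.
Qed.

Lemma mx2_app_transfer_cat u w v :
  mx2_app (transfer (u ++ w)) v = mx2_app (transfer u) (mx2_app (transfer w) v).
Proof.
elim: u => [|a u IH] /=; last by rewrite !mx2_appM IH.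
by case: (mx2_app _ v) => x y; rewrite /mx2_app /=; congr pair; ring.
Qed.

Lemma mx2_app_transfer_seqpow s k v :
  mx2_app (transfer (seqpow s k)) v = iter k (mx2_app (transfer s)) v.
Proof.
elim: k => [|k IH] /=; last by rewrite mx2_app_transfer_cat IH.
by case: v => x y; rewrite /mx2_app /=; congr pair; ring.
Qed.

Lemma apply_moves_left al be k m :
  apply_moves (nseq k true) (al, seqpow al m.+1 ++ be, seqpow al m ++ be) =
  (al, seqpow al (m + k).+1 ++ be, seqpow al (m + k) ++ be).
Proof.
elim: k m => [|k IH] m; first by rewrite addn0.
by rewrite /= catA -seqpowS IH addSnnS.
Qed.

Lemma apply_moves_right al be k m :
  apply_moves (nseq k false) (al ++ seqpow be m, al ++ seqpow be m.+1, be) =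
  (al ++ seqpow be (m + k), al ++ seqpow be (m + k).+1, be).
Proof.
elim: k m => [|k IH] m; first by rewrite addn0.
by rewrite /= -catA -seqpowSr IH addSnnS.
Qed.

Lemma is_label_left al be k :
  is_label al be (isine al, isine (seqpow al (k + 1) ++ be), isine (seqpow al k ++ be)).
Proof.
exists (al, seqpow al (k + 1) ++ be, seqpow al k ++ be); split => //.
exists (nseq k true).
have -> : (al, al ++ be, be) = (al, seqpow al 1 ++ be, seqpow al 0 ++ be).
  by rewrite /seqpow /= cats0.
by rewrite apply_moves_left add0n addn1.
Qed.

Lemma is_label_right al be k :
  is_label al be (isine (al ++ seqpow be k), isine (al ++ seqpow be (k + 1)), isine be).
Proof.
exists (al ++ seqpow be k, al ++ seqpow be (k + 1), be); split => //.
exists (nseq k false).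
have -> : (al, al ++ be, be) = (al ++ seqpow be 0, al ++ seqpow be 1, be).
  by rewrite /seqpow /= !cats0.
by rewrite apply_moves_right add0n addn1.
Qed.

Section SnBlocks.

Variable n : nat.

Local Notation p := (n * a_ n)%N.
Local Notation q := (n * b_ n)%N.

(* With t = n^2 + 2 = tr T(n)^2, Chebyshev gives tr T(n)^6 = t^3 - 3t = p^2 + 2
   = tr T(p)^2 and tr T(n)^10 = t^5 - 5t^3 + 5t = q^2 + 2 = tr T(q)^2, so
   T(p)^10 and T(q)^6 both have the trace of T(n)^30. *)
Lemma continuant_S0pow_S1pow j :
  continuant (seqpow (S0 n) (5 * j).+1 ++ [:: q]) =
  continuant (S0 n ++ seqpow (S1 n) (3 * j) ++ [:: q]).
Proof.
apply/eqP; rewrite -eqz_nat; apply/eqP.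
rewrite seqpowS -catA -[_%:Z]/(pairZ (contpair _)).1 -[RHS]/(pairZ (contpair _)).1.
rewrite !pairZ_contpair_cat mulnC seqpowM [(3 * j)%N]mulnC seqpowM.
rewrite !mx2_app_transfer_seqpow.
have p_poly : p%:Z = n%:Z * (n%:Z ^+ 2 + 3) by rewrite /a_ -!natz !(natrD, natrM, natrX).
have q_poly : q%:Z = n%:Z * (n%:Z ^+ 4 + 5 * n%:Z ^+ 2 + 5)
  by rewrite /b_ -!natz !(natrD, natrM, natrX).
have -> : pairZ (contpair [:: q]) = (q%:Z, 1) by rewrite /pairZ /= muln1 addn0.
apply: iter_mx2_app_eq.
- by rewrite !mx2_det_transfer.
- by rewrite /mx2_tr /= p_poly q_poly; ring.
- by rewrite /mx2_app /= p_poly q_poly; ring.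
Qed.

Hypothesis n_gt0 : (0 < n)%N.

Lemma p_gt0 : (0 < p)%N.
Proof. by rewrite muln_gt0 n_gt0 addn_gt0 orbT. Qed.

Lemma ltn_p_q : (p < q)%N.
Proof. by rewrite ltn_pmul2l // /a_ /b_; lia. Qed.

Lemma positive_S0 : positive (S0 n).
Proof. by rewrite /= p_gt0. Qed.

Lemma positive_S1 : positive (S1 n).
Proof. by rewrite /= (ltn_trans p_gt0 ltn_p_q). Qed.

Lemma isine_S0 : isine (S0 n) = p.
Proof. by rewrite (isine_rcons [:: p]) ?continuant1 //= p_gt0. Qed.

Lemma isine_cat_S1 l : positive l -> isine (l ++ S1 n) = continuant (l ++ [:: q]).
Proof.
move=> pos_l; rewrite -[S1 n]/([:: q] ++ [:: q]) catA cats1 isine_rcons //.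
  by case: l {pos_l}.
by rewrite all_cat pos_l; case/andP: positive_S1.
Qed.

Lemma isine_S1 : isine (S1 n) = q.
Proof. by rewrite -[S1 n]cat0s isine_cat_S1 // continuant1. Qed.

Lemma isine_S0_S1pow m :
  isine (S0 n ++ seqpow (S1 n) m.+1) = continuant (S0 n ++ seqpow (S1 n) m ++ [:: q]).
Proof.
by rewrite seqpowSr catA isine_cat_S1 -?catA // all_cat positive_S0 positive_seqpow ?positive_S1.
Qed.

End SnBlocks.

Theorem theorem1 (n j : nat) (hn : (0 < n)%N) (hj : (1 <= j)%N) :
  let t1 := (isine (S0 n),
             isine (seqpow (S0 n) (5 * j + 1) ++ S1 n),
             isine (seqpow (S0 n) (5 * j) ++ S1 n)) in
  let t2 := (isine (S0 n ++ seqpow (S1 n) (3 * j)),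
             isine (S0 n ++ seqpow (S1 n) (3 * j + 1)),
             isine (S1 n)) in
  [/\ is_label (S0 n) (S1 n) t1,
      is_label (S0 n) (S1 n) t2,
      max3 t1 = max3 t2,
      t1 <> t2
    & ~ perm_eq (entries t1) (entries t2)].
Proof.
move=> t1 t2.
have [k def_3j] : exists k, (3 * j)%N = k.+1 by exists (3 * j).-1; lia.
set p := (n * a_ n)%N; set q := (n * b_ n)%N.
set X := continuant (seqpow (S0 n) (5 * j).+1 ++ [:: q]).
set Y := continuant (seqpow (S0 n) (5 * j) ++ [:: q]).
set Z := continuant (S0 n ++ seqpow (S1 n) k ++ [:: q]).
have pos_S0 := positive_S0 n hn; have pos_S1 := positive_S1 n hn.
have ltn_p_q := ltn_p_q n hn.
have pos_q : positive [:: q] by rewrite /= (ltn_trans (p_gt0 n hn)).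
have [eq_t1 eq_t2] : t1 = (p, X, Y) /\ t2 = (Z, X, q).
  rewrite /t1 /t2 isine_S0 // isine_S1 // !addn1 !isine_cat_S1 ?positive_seqpow //.
  by rewrite def_3j !isine_S0_S1pow // -def_3j -continuant_S0pow_S1pow.
have ltn_p_Z : (p < Z)%N.
  by apply: ltn_continuant_double; rewrite ?p_gt0 // all_cat positive_seqpow.
have leq_Y_X : (Y <= X)%N.
  by rewrite /X /Y seqpowS -catA leq_continuant_catl ?all_cat ?positive_seqpow.
have leq_Z_X : (Z <= X)%N.
  rewrite /X /Z continuant_S0pow_S1pow def_3j seqpowS -catA.
  by rewrite leq_continuant_insert ?all_cat ?positive_seqpow.
have leq_q_X : (q <= X)%N.
  by rewrite -{1}(continuant1 q) /X leq_continuant_catl ?positive_seqpow.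
split; [exact: is_label_left | exact: is_label_right | ..];
  rewrite eq_t1 eq_t2 /max3 /entries.
- lia.
- by case=> eq_p_Z; rewrite eq_p_Z ltnn in ltn_p_Z.
- by move=> /perm_mem /(_ p); rewrite !inE eqxx => /esym /or3P[] /eqP; lia.
Qed.
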